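(* Let $V$ be a Hilbert space of functions on a domain $\Omega\subset\mathbb{R}^d$ with a norm $\|\cdot\|$, let $V_0\subset V_1\subset\dots\subset V_L\subset V$ be nested finite element spaces, let $u\in V$ be the exact solution of a variational problem $a(u,v)=b(v)$ for all $v\in V$, and let $u_\ell\in V_\ell$ ($\ell=0,\dots,L$) be the corresponding discrete solutions. Set $e_\ell:=u-u_\ell$ and $\theta_\ell:=\|e_\ell\|/\|e_{\ell-1}\|$. Let $0<j<L$ be an integer and $\ell:=L-j$, and suppose there exist constants $\varepsilon>0$ and $\theta>0$ such that $$\theta\le\theta_i\le(1+\varepsilon)\theta<1\quad\text{for all } i\text{ with } \ell\le i\le L.$$ Define $\tilde e_k:=u_L-u_k$ for $k<L$, $\tilde\theta_\ell:=\|\tilde e_\ell\|/\|\tilde e_{\ell-1}\|$, and $\eta_j:=\tilde\theta_\ell^{\,j}\,\|\tilde e_\ell\|$. Write $\theta_\varepsilon:=(1+\varepsilon)\theta$. Then $$C_1\|e_L\|\le\eta_j\le C_2\|e_L\|,$$ where $$C_1=(1+\varepsilon)^{-j}\frac{(1-\theta_\varepsilon^{j})^{j+1}}{(1+\theta_\varepsilon^{j+1})^{j}},\qquad C_2=(1+\varepsilon)^{j}\frac{(1+\theta_\varepsilon^{j})^{j+1}}{(1-\theta_\varepsilon^{j+1})^{j}}.$$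
   Context: $a:V\times V\to\mathbb{R}$ is a bilinear form and $b:V\to\mathbb{R}$ a linear form; the discrete solutions $u_\ell\in V_\ell$ are the (exact) Galerkin solutions on the spaces $V_\ell$, which are associated with a sequence of nested triangulations of $\Omega$ obtained by successive uniform refinement. $e_\ell$ is the discretization error on level $\ell$, $\theta_\ell$ the grid convergence factor, $\tilde e_\ell$ the approximation of $e_\ell$ using the finest solution $u_L$ in place of $u$, and $\eta_j$ the resulting a posteriori estimate of $\|e_L\|$. *)

From HB Require Import structures.
From mathcomp Require Import all_boot all_order all_algebra.
From mathcomp Require Import all_classical all_reals all_analysis.
Set Implicit Arguments. Unset Strict Implicit. Unset Printing Implicit Defensive.
Import Order.TTheory GRing.Theory Num.Theory.
Import numFieldNormedType.Exports.
Local Open Scope classical_set_scope.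
Local Open Scope ring_scope.

Section Defs.
Context {R : realType} {V : normedModType R}.

(* ip is an inner product on V which induces the norm of V (so that V,
   when complete, is a real Hilbert space with norm `|.|). *)
Definition is_inner_product (ip : V -> V -> R) : Prop :=
  [/\ forall x y, ip x y = ip y x,
      forall (c : R) x y z, ip (c *: x + y) z = c * ip x z + ip y z
    & forall x, ip x x = `|x| ^+ 2].

Definition is_subspace (S : set V) : Prop :=
  [/\ S 0, forall x y, S x -> S y -> S (x + y)
    & forall (c : R) x, S x -> S (c *: x)].

Definition is_fin_dim_subspace (S : set V) : Prop :=
  is_subspace S /\
  exists s : seq V, forall x,
    S x <-> exists c : nat -> R, x = \sum_(i < size s) c i *: nth 0 s i.

Definition is_bilinear (a : V -> V -> R) : Prop :=
  (forall (c : R) x y z, a (c *: x + y) z = c * a x z + a y z) /\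
  (forall (c : R) x y z, a z (c *: x + y) = c * a z x + a z y).

Definition is_linear_form (b : V -> R) : Prop :=
  forall (c : R) x y, b (c *: x + y) = c * b x + b y.

Definition err (u : V) (us : nat -> V) (k : nat) : V := u - us k.

Definition conv_factor (u : V) (us : nat -> V) (k : nat) : R :=
  `|err u us k| / `|err u us k.-1|.

Definition approx_err (us : nat -> V) (L k : nat) : V := us L - us k.

Definition approx_conv_factor (us : nat -> V) (L k : nat) : R :=
  `|approx_err us L k| / `|approx_err us L k.-1|.

Definition eta_est (us : nat -> V) (L j : nat) : R :=
  approx_conv_factor us L (L - j) ^+ j * `|approx_err us L (L - j)|.

End Defs.

From HB Require Import structures.
From mathcomp Require Import all_boot all_order all_algebra.
From mathcomp Require Import all_classical all_reals all_analysis.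
From mathcomp Require Import ring lra.
Import Order.TTheory GRing.Theory Num.Theory.
Import numFieldNormedType.Exports.
Local Open Scope classical_set_scope.
Local Open Scope ring_scope.

(* Write A = |e_(l-1)|, B = |e_l| and E = |e_L|.  The bounds on the
   convergence factors give theta A <= B <= theta_eps A and, chained over the
   j levels from l to L, theta^j B <= E <= theta_eps^j B.  Since
   u_L - u_k = e_k - e_L, the computable norms |e~_l| and |e~_(l-1)| differ
   from B and A by at most E <= theta_eps^j B, so eta_j is (B/A)^j B up to
   the factors (1 +- theta_eps^j)^(j+1) / (1 -+ theta_eps^(j+1))^j.  Finally
   (B/A)^j B lies between theta^j B and theta_eps^j B = (1 + eps)^j theta^j B,
   i.e. within a factor (1 + eps)^(+-j) of E. *)

Section RatioBounds.
Context {R : realFieldType}.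
Implicit Types (a b lo hi y z A B E t p : R) (f : nat -> R).

Lemma ratio_ge_den_gt0 {a b lo} : 0 <= b -> 0 < lo -> lo <= a / b -> 0 < b.
Proof.
rewrite le_eqVlt => /predU1P[<- lo_gt0|//].
by rewrite invr0 mulr0 => /(lt_le_trans lo_gt0); rewrite ltxx.
Qed.

Lemma ratio_bounds_mul {a b lo hi} :
  0 <= b -> 0 < lo -> lo <= a / b -> a / b <= hi -> lo * b <= a <= hi * b.
Proof.
move=> b_ge0 lo_gt0 lo_le hi_ge.
have b_gt0 := ratio_ge_den_gt0 b_ge0 lo_gt0 lo_le.
by rewrite -(ler_pdivlMr lo a b_gt0) -(ler_pdivrMr hi a b_gt0) lo_le hi_ge.
Qed.

Lemma ratio_chain_bounds f l n lo hi :
  (forall i, 0 <= f i) -> 0 < lo ->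
  (forall i, (l < i <= l + n)%N -> lo <= f i / f i.-1 <= hi) ->
  lo ^+ n * f l <= f (l + n)%N <= hi ^+ n * f l.
Proof.
move=> f_ge0 lo_gt0; elim: n => [|n IHn] ratio_bnd.
  by rewrite addn0 !mul1r lexx.
have /andP[lo_le hi_ge] : lo <= f (l + n).+1 / f (l + n)%N <= hi.
  by have := ratio_bnd (l + n.+1)%N; rewrite addnS ltnS leq_addr leqnn; apply.
have /andP[lo_f f_hi] := ratio_bounds_mul (f_ge0 _) lo_gt0 lo_le hi_ge.
have /andP[lo_IH IH_hi] : lo ^+ n * f l <= f (l + n)%N <= hi ^+ n * f l.
  by apply: IHn => i /andP[li iln]; rewrite ratio_bnd // li (leq_trans iln) ?leq_add2l.
have hi_ge0 : 0 <= hi by apply: le_trans (ltW lo_gt0) (le_trans lo_le hi_ge).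
rewrite !exprS -!mulrA addnS; apply/andP; split.
- by apply: le_trans lo_f; rewrite ler_pM2l.
- by apply: le_trans f_hi _; rewrite ler_wpM2l.
Qed.

Lemma ler_ratio_expM y z (y1 z1 : R) (j : nat) :
  0 <= y -> y <= y1 -> 0 < z1 -> z1 <= z -> (y / z) ^+ j * y <= (y1 / z1) ^+ j * y1.
Proof.
move=> y_ge0 yy1 z1_gt0 z1z.
have z_gt0 := lt_le_trans z1_gt0 z1z; have y1_ge0 := le_trans y_ge0 yy1.
have yz_ge0 : 0 <= y / z by apply: divr_ge0; last exact: ltW.
have y1z1_ge0 : 0 <= y1 / z1 by apply: divr_ge0; last exact: ltW.
apply: ler_pM => //; first exact: exprn_ge0.
apply: lerXn2r => //.
by apply: ler_pM => //; [rewrite invr_ge0 ltW | rewrite lef_pV2].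
Qed.

Lemma ratio_expM_scale (c d A B : R) (j : nat) :
  (c * B / (d * A)) ^+ j * (c * B) = (B / A) ^+ j * B * (c ^+ j.+1 / d ^+ j).
Proof. by rewrite !expr_div_n !exprMn !invfM exprS; ring. Qed.

Lemma perturbed_ratio_expM_le {A B E y z t p} (j : nat) :
  0 < A -> 0 <= t < 1 -> 0 <= p <= 1 -> B <= t * A -> E <= p * B ->
  0 <= y -> y <= B + E -> A - E <= z ->
  (y / z) ^+ j * y <= (B / A) ^+ j * B * ((1 + p) ^+ j.+1 / (1 - t * p) ^+ j).
Proof.
move=> A_gt0 /andP[t_ge0 t_lt1] /andP[p_ge0 p_le1] BA EB y_ge0 yB zA.
have tp_lt1 : t * p < 1 by nra.
rewrite -ratio_expM_scale; apply: ler_ratio_expM => //; nra.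
Qed.

Lemma perturbed_ratio_expM_ge {A B E y z t p} (j : nat) :
  0 < A -> 0 <= t < 1 -> 0 <= p < 1 -> 0 <= B <= t * A -> E <= p * B ->
  B - E <= y -> A - E <= z -> z <= A + E ->
  (B / A) ^+ j * B * ((1 - p) ^+ j.+1 / (1 + t * p) ^+ j) <= (y / z) ^+ j * y.
Proof.
move=> A_gt0 /andP[t_ge0 t_lt1] /andP[p_ge0 p_lt1] /andP[B_ge0 BA] EB yB zA Az.
have tp_lt1 : t * p < 1 by nra.
rewrite -ratio_expM_scale; apply: ler_ratio_expM; nra.
Qed.

Lemma perturbed_ratio_expM_bounds {A B E y z theta eps} {j : nat} :
  let te := (1 + eps) * theta in
  0 < A -> 0 < theta -> 0 < eps -> (0 < j)%N -> te < 1 ->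
  theta * A <= B <= te * A -> theta ^+ j * B <= E <= te ^+ j * B ->
  B - E <= y <= B + E -> A - E <= z <= A + E ->
  (1 + eps) ^- j * ((1 - te ^+ j) ^+ j.+1 / (1 + te ^+ j.+1) ^+ j) * E
    <= (y / z) ^+ j * y <=
  (1 + eps) ^+ j * ((1 + te ^+ j) ^+ j.+1 / (1 - te ^+ j.+1) ^+ j) * E.
Proof.
move=> te A_gt0 theta_gt0 eps_gt0 j_gt0 te_lt1 /andP[BA_lo BA_hi]
  /andP[decay_lo decay_hi] /andP[yl yu] /andP[zl zu].
have te_ge0 : 0 <= te by rewrite mulr_ge0 //; lra.
have B_ge0 : 0 <= B by apply: le_trans BA_lo; rewrite mulr_ge0 // ltW.
have tej_ge0 : 0 <= te ^+ j := exprn_ge0 _ te_ge0.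
have tej_lt1 : te ^+ j < 1 by rewrite exprn_ilt1 // -lt0n.
have tej1_ge0 : 0 <= te ^+ j.+1 := exprn_ge0 _ te_ge0.
have tej1_lt1 : te ^+ j.+1 < 1 by rewrite exprn_ilt1.
have tej : te ^+ j = (1 + eps) ^+ j * theta ^+ j by rewrite exprMn.
have eps_pow_gt0 : 0 < (1 + eps) ^+ j by rewrite exprn_gt0 //; lra.
have BA_ge0 : 0 <= B / A by rewrite divr_ge0 // ltW.
have pow_lo : theta ^+ j * B <= (B / A) ^+ j * B.
  by apply: ler_wpM2r => //; apply: lerXn2r; rewrite // ?nnegrE ?ler_pdivlMr // ltW.
have pow_hi : (B / A) ^+ j * B <= te ^+ j * B.
  by apply: ler_wpM2r => //; apply: lerXn2r; rewrite // ler_pdivrMr.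
have K1_ge0 : 0 <= (1 - te ^+ j) ^+ j.+1 / (1 + te ^+ j.+1) ^+ j.
  by rewrite divr_ge0 // exprn_ge0 // ?subr_ge0 ?addr_ge0 // ltW.
have K2_ge0 : 0 <= (1 + te ^+ j) ^+ j.+1 / (1 - te ^+ j.+1) ^+ j.
  by rewrite divr_ge0 // exprn_ge0 // ?subr_ge0 ?addr_ge0 // ltW.
have te_range : 0 <= te < 1 by rewrite te_ge0.
rewrite [te ^+ j.+1]exprS; apply/andP; split.
- have tej_range : 0 <= te ^+ j < 1 by rewrite tej_ge0.
  have B_range : 0 <= B <= te * A by rewrite B_ge0.
  apply: le_trans _ (perturbed_ratio_expM_ge j A_gt0 te_range tej_range B_range
                       decay_hi yl zl zu).
  rewrite mulrAC ler_wpM2r -?exprS //; apply: le_trans pow_lo.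
  by rewrite ler_pdivrMl // mulrA -tej.
- have tej_range : 0 <= te ^+ j <= 1 by rewrite tej_ge0 ltW.
  have E_le_B : E <= B by apply: le_trans decay_hi _; rewrite ler_piMl // ltW.
  have y_ge0 : 0 <= y by apply: le_trans yl; rewrite subr_ge0.
  apply: le_trans (perturbed_ratio_expM_le j A_gt0 te_range tej_range BA_hi decay_hi
                     y_ge0 yu zl) _.
  rewrite [leRHS]mulrAC ler_wpM2r -?exprS //; apply: le_trans pow_hi _.
  by rewrite tej -mulrA ler_wpM2l // ltW.
Qed.

End RatioBounds.

Section ApproxError.
Context {R : realType} {V : normedModType R} (u : V) (us : nat -> V) (L : nat).

Lemma approx_errE k : approx_err us L k = err u us k - err u us L.
Proof. by rewrite /approx_err /err opprB [RHS]addrC addrA subrK. Qed.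

Lemma approx_err_norm_bounds k :
  `|err u us k| - `|err u us L| <= `|approx_err us L k| <= `|err u us k| + `|err u us L|.
Proof. by rewrite approx_errE lerB_dist ler_normB. Qed.

End ApproxError.

Theorem theorem1 (R : realType) (V : completeNormedModType R)
  (ip : V -> V -> R) (a : V -> V -> R) (b : V -> R)
  (Vs : nat -> set V) (L : nat) (u : V) (us : nat -> V)
  (j : nat) (eps theta : R) :
  is_inner_product ip ->
  is_bilinear a -> is_linear_form b ->
  (forall l, (l <= L)%N -> is_fin_dim_subspace (Vs l)) ->
  (forall l, (l < L)%N -> Vs l `<=` Vs l.+1) ->
  (forall v, a u v = b v) ->
  (forall l, (l <= L)%N -> Vs l (us l) /\ forall v, Vs l v -> a (us l) v = b v) ->
  (0 < j)%N -> (j < L)%N ->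
  0 < eps -> 0 < theta ->
  (forall i, (L - j <= i)%N -> (i <= L)%N ->
     theta <= conv_factor u us i /\ conv_factor u us i <= (1 + eps) * theta) ->
  (1 + eps) * theta < 1 ->
  let theta_eps := (1 + eps) * theta in
  let C1 := (1 + eps) ^- j * ((1 - theta_eps ^+ j) ^+ j.+1
                               / (1 + theta_eps ^+ j.+1) ^+ j) in
  let C2 := (1 + eps) ^+ j * ((1 + theta_eps ^+ j) ^+ j.+1
                               / (1 - theta_eps ^+ j.+1) ^+ j) in
  C1 * `|err u us L| <= eta_est us L j /\ eta_est us L j <= C2 * `|err u us L|.
Proof.
move=> _ _ _ _ _ _ _ j_gt0 jL eps_gt0 theta_gt0 conv_bnd te_lt1 te C1 C2.
set f := fun i => `|err u us i|; set l := (L - j)%N.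
have f_ge0 i : 0 <= f i by apply: normr_ge0.
have lj : (l + j)%N = L by rewrite subnK // ltnW.
have ratio_bnd i : (l <= i <= L)%N -> theta <= f i / f i.-1 <= te.
  by move=> /andP[li iL]; have [-> ->] := conv_bnd i li iL.
have /andP[ratio_lo ratio_hi] : theta <= f l / f l.-1 <= te.
  by apply: ratio_bnd; rewrite leqnn leq_subr.
have decay : theta ^+ j * f l <= f L <= te ^+ j * f l.
  rewrite -[in f L]lj; apply: ratio_chain_bounds => // i /andP[li ilj].
  by rewrite ratio_bnd // ltnW //= -lj.
have /andP[] := perturbed_ratio_expM_bounds
  (ratio_ge_den_gt0 (f_ge0 _) theta_gt0 ratio_lo) theta_gt0 eps_gt0 j_gt0 te_lt1
  (ratio_bounds_mul (f_ge0 _) theta_gt0 ratio_lo ratio_hi) decay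
  (approx_err_norm_bounds u us L l) (approx_err_norm_bounds u us L l.-1).
by split.
Qed.
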